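(* Let $\alpha\in\{1/2,-1/2\}$, $\nu_1>0$ and $x'>0$ be fixed, let $s=s(N)\in\mathbb Z_{\ge0}$ satisfy $s\sim N^{1/4}\nu_1$, and let $x=N^{-1/2}x'-1$ (which lies in $[-1,1]$ for large $N$). Then as $N\to\infty$, $$N^{-1/4}(-1)^sJ_{s,\alpha}(x)\sim\frac{\sin[\nu_1\sqrt{2x'}]}{2^\alpha\sqrt{x'}}.$$
   Context: $J_{k,1/2}$ and $J_{k,-1/2}$ ($k\ge0$) are defined by $J_{0,1/2}=1$, $J_{1,1/2}(x)=2x$, $J_{0,-1/2}=1$, $J_{1,-1/2}(x)=2x-1$, both satisfying $xp_k(x)=\frac12p_{k+1}(x)+\frac12p_{k-1}(x)$ for $k\ge1$; equivalently $J_{k,1/2}(\cos\theta)=\frac{\sin((k+1)\theta)}{\sin\theta}$ and $J_{k,-1/2}(\cos\theta)=\frac{\cos((k+1/2)\theta)}{\cos(\theta/2)}$. *)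

From Stdlib Require Import Reals.
From Coquelicot Require Import Coquelicot.
Open Scope R_scope.

(* Pairs (J_{k,a}(x), J_{k+1,a}(x)) computed by the three-term recurrence
   x p_k = 1/2 p_{k+1} + 1/2 p_{k-1}, i.e. p_{k+1} = 2 x p_k - p_{k-1},
   with J_{0,a} = 1 and J_{1,a}(x) = 2x + a - 1/2
   (so J_{1,1/2}(x) = 2x and J_{1,-1/2}(x) = 2x - 1). *)
Fixpoint Jpair (a x : R) (k : nat) : R * R :=
  match k with
  | O => (1, 2 * x + a - 1 / 2)
  | S k' => let (p, q) := Jpair a x k' in (q, 2 * x * q - p)
  end.

Definition J (k : nat) (a x : R) : R := fst (Jpair a x k).

(* Put x = -cos phi. The sequences k |-> (-1)^k J_{k,a}(-cos phi) sin(c phi) and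
   k |-> sin((k + c) phi) satisfy the same three-term recurrence and agree for k = 0, 1,
   where c = 1 for a = 1/2 and c = 1/2 for a = -1/2. With u = N^(-1/4) and
   x = u^2 x' - 1 one gets phi = 2 asin(u sqrt(2 x') / 2) ~ u sqrt(2 x'), so
   u (-1)^s J_{s,a}(x) = sin((s + c) phi) / (sin(c phi) / u)
   tends to sin(nu1 sqrt(2 x')) / (c sqrt(2 x')), and c sqrt 2 = 2^a. *)
From Stdlib Require Import Reals Lra.
From Coquelicot Require Import Coquelicot.
Open Scope R_scope.

Lemma J_0 (a x : R) : J 0 a x = 1.
Proof. reflexivity. Qed.

Lemma J_1 (a x : R) : J 1 a x = 2 * x + a - 1 / 2.
Proof. reflexivity. Qed.

Lemma J_SS (a x : R) (k : nat) : J (S (S k)) a x = 2 * x * J (S k) a x - J k a x.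
Proof. unfold J; simpl; destruct (Jpair a x k); reflexivity. Qed.

Lemma three_term_recurrence_sin (phi c : R) (f : nat -> R) :
  f 0%nat = sin (c * phi) -> f 1%nat = sin ((1 + c) * phi) ->
  (forall k, f (S (S k)) = 2 * cos phi * f (S k) - f k) ->
  forall k, f k = sin ((INR k + c) * phi).
Proof.
  intros f0 f1 fSS.
  assert (pair : forall k, f k = sin ((INR k + c) * phi)
                       /\ f (S k) = sin ((INR (S k) + c) * phi)).
  { induction k as [|k [IHk IHSk]].
    - split; [rewrite f0 | rewrite f1]; f_equal; simpl; ring.
    - split; [exact IHSk|].
      rewrite fSS, IHk, IHSk, !S_INR.
      set (A := (INR k + 1 + c) * phi).
      replace ((INR k + c) * phi) with (A - phi) by (unfold A; ring).
      replace ((INR k + 1 + 1 + c) * phi) with (A + phi) by (unfold A; ring).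
      rewrite sin_plus, sin_minus; ring. }
  intro k; apply pair.
Qed.

(* At theta = pi - phi this is the paper's closed form of J_{k,a}(cos theta). *)
Definition J_phase (a : R) : R := a / 2 + 3 / 4.

Lemma J_neg_cos (a phi : R) : a = 1 / 2 \/ a = - (1 / 2) ->
  forall k, sin (J_phase a * phi) * ((-1) ^ k * J k a (- cos phi))
            = sin ((INR k + J_phase a) * phi).
Proof.
  intros Ha; apply three_term_recurrence_sin.
  - rewrite J_0; simpl; ring.
  - rewrite J_1; unfold J_phase; simpl pow.
    destruct Ha as [-> | ->].
    + replace ((1 + (1 / 2 / 2 + 3 / 4)) * phi) with (2 * phi) by field.
      replace ((1 / 2 / 2 + 3 / 4) * phi) with phi by field.
      rewrite sin_2a; ring.
    + set (h := phi / 2).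
      replace phi with (2 * h) by (unfold h; field).
      replace ((- (1 / 2) / 2 + 3 / 4) * (2 * h)) with h by field.
      replace ((1 + (- (1 / 2) / 2 + 3 / 4)) * (2 * h)) with (2 * h + h) by field.
      rewrite sin_plus, sin_2a, cos_2a_cos; field.
  - intro k; rewrite J_SS; simpl pow; ring.
Qed.

Lemma J_phase_sqrt2 (a : R) : a = 1 / 2 \/ a = - (1 / 2) ->
  J_phase a * sqrt 2 = Rpower 2 a.
Proof.
  assert (sqrt2_sq : sqrt 2 * sqrt 2 = 2) by (apply sqrt_sqrt; lra).
  assert (sqrt2_pos : 0 < sqrt 2) by (apply sqrt_lt_R0; lra).
  unfold J_phase; intros [-> | ->].
  - replace (1 / 2) with (/ 2) by field; rewrite Rpower_sqrt by lra; field.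
  - rewrite Rpower_Ropp; replace (1 / 2) with (/ 2) by field.
    rewrite Rpower_sqrt by lra; field_simplify_eq; lra.
Qed.

Lemma asin_neq0 (v : R) : -1 <= v <= 1 -> v <> 0 -> asin v <> 0.
Proof. intros Hv Hv0 E; apply Hv0; rewrite <- (sin_asin v Hv), E; apply sin_0. Qed.

Lemma cos_2_asin (v : R) : -1 <= v <= 1 -> cos (2 * asin v) = 1 - 2 * v ^ 2.
Proof. intros Hv; rewrite cos_2a_sin, sin_asin by exact Hv; ring. Qed.

Lemma is_lim_seq_Rpower_INR_neg (e : R) : 0 < e ->
  is_lim_seq (fun N => Rpower (INR N) (- e)) 0.
Proof.
  intros He.
  assert (ln_lim : is_lim_seq (fun N => ln (INR N)) p_infty).
  { apply (is_lim_comp_seq ln INR p_infty p_infty is_lim_ln_p).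
    - exists 0%nat; intros; discriminate.
    - exact is_lim_seq_INR. }
  assert (exponent_lim : is_lim_seq (fun N => - e * ln (INR N)) m_infty).
  { pose proof (is_lim_seq_scal_l _ (- e) _ ln_lim) as H.
    simpl in H; destruct (Rle_dec 0 (- e)); [lra | exact H]. }
  apply (is_lim_comp_seq exp _ m_infty 0 is_lim_exp_m); [|exact exponent_lim].
  exists 0%nat; intros; discriminate.
Qed.

Lemma is_lim_seq_eventually_neq0 (v : nat -> R) (l : R) :
  is_lim_seq v l -> l <> 0 -> eventually (fun n => v n <> 0).
Proof.
  intros Hv Hl; apply is_lim_seq_spec in Hv.
  apply (filter_imp (fun n => Rabs (v n - l) < Rabs l));
    [|exact (Hv (mkposreal _ (Rabs_pos_lt l Hl)))].
  intros n Hn E; rewrite E, Rminus_0_l, Rabs_Ropp in Hn; lra.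
Qed.

Lemma is_lim_seq_eventually_in_unit (v : nat -> R) :
  is_lim_seq v 0 -> eventually (fun n => -1 <= v n <= 1).
Proof.
  intros Hv; apply is_lim_seq_spec in Hv.
  apply (filter_imp (fun n => Rabs (v n - 0) < 1));
    [|exact (Hv (mkposreal 1 Rlt_0_1))].
  intros n Hn; rewrite Rminus_0_r in Hn; apply Rabs_lt_between in Hn; lra.
Qed.

Lemma is_lim_seq_sinc (z : nat -> R) :
  is_lim_seq z 0 -> eventually (fun n => z n <> 0) ->
  is_lim_seq (fun n => sin (z n) / z n) 1.
Proof.
  intros Hz Hne.
  apply (is_lim_comp_seq (fun x => sin x / x) z 0 1 is_lim_sinc_0); [|exact Hz].
  apply (filter_imp _ _ (fun n Hn E => Hn (proj1 (Rbar_finite_eq _ _) E)) Hne).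
Qed.

Lemma is_lim_seq_asinc (v : nat -> R) :
  is_lim_seq v 0 -> eventually (fun n => v n <> 0) ->
  is_lim_seq (fun n => asin (v n) / v n) 1.
Proof.
  intros Hv Hne.
  assert (Hunit := is_lim_seq_eventually_in_unit v Hv).
  assert (asin_lim : is_lim_seq (fun n => asin (v n)) 0).
  { rewrite <- asin_0; apply is_lim_seq_continuous; [|exact Hv].
    apply derivable_continuous_pt, derivable_pt_asin; lra. }
  assert (asin_ne : eventually (fun n => asin (v n) <> 0)).
  { apply (filter_imp _ _ (fun n Hn => asin_neq0 (v n) (proj1 Hn) (proj2 Hn))).
    exact (filter_and _ _ Hunit Hne). }
  assert (inv_lim := is_lim_seq_inv _ _ (is_lim_seq_sinc _ asin_lim asin_ne)
                                       ltac:(intro E; injection E; lra)).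
  simpl in inv_lim; rewrite Rinv_1 in inv_lim.
  eapply is_lim_seq_ext_loc; [|exact inv_lim].
  refine (filter_imp _ _ (fun n Hn => _) (filter_and _ _ Hunit (filter_and _ _ Hne asin_ne))).
  destruct Hn as (Hn & Hv0 & Hasin); rewrite sin_asin by exact Hn; now field.
Qed.

Lemma is_lim_seq_double_asin_div (u : nat -> R) (kappa : R) :
  (forall n, u n <> 0) -> kappa <> 0 -> is_lim_seq u 0 ->
  is_lim_seq (fun n => 2 * asin (kappa * u n) / u n) (2 * kappa).
Proof.
  intros Hu Hk Hlim.
  assert (ku_lim : is_lim_seq (fun n => kappa * u n) 0).
  { replace 0 with (kappa * 0) by ring; apply (is_lim_seq_scal_l _ kappa 0 Hlim). }
  assert (ku_ne : eventually (fun n => kappa * u n <> 0))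
    by (exists 0%nat; intros n _; apply Rmult_integral_contrapositive; auto).
  pose proof (is_lim_seq_scal_l _ (2 * kappa) _ (is_lim_seq_asinc _ ku_lim ku_ne)) as H.
  simpl in H; rewrite Rmult_1_r in H.
  refine (is_lim_seq_ext _ _ _ (fun n => _) H); field; split; [apply Hu | exact Hk].
Qed.

Section SineQuotient.

Variables (u phi f : nat -> R) (t : nat -> nat) (omega nu c : R).
Hypothesis u_neq0 : forall n, u n <> 0.
Hypothesis u_lim : is_lim_seq u 0.
Hypothesis phi_u_lim : is_lim_seq (fun n => phi n / u n) omega.
Hypothesis tu_lim : is_lim_seq (fun n => INR (t n) * u n) nu.
Hypothesis phi_neq0 : eventually (fun n => phi n <> 0).
Hypothesis c_neq0 : c <> 0.
Hypothesis omega_neq0 : omega <> 0.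
Hypothesis f_sin_quotient :
  eventually (fun n => sin (c * phi n) * f n = sin ((INR (t n) + c) * phi n)).

Let c_phi_lim : is_lim_seq (fun n => c * phi n) 0.
Proof.
  pose proof (is_lim_seq_scal_l _ c _ (is_lim_seq_mult' _ _ _ _ phi_u_lim u_lim)) as H.
  simpl in H; rewrite Rmult_0_r, Rmult_0_r in H.
  refine (is_lim_seq_ext _ _ _ (fun n => _) H); field; apply u_neq0.
Qed.

Let numerator_lim : is_lim_seq (fun n => (INR (t n) + c) * phi n) (nu * omega).
Proof.
  pose proof (is_lim_seq_plus' _ _ _ _ (is_lim_seq_mult' _ _ _ _ tu_lim phi_u_lim)
                c_phi_lim) as H.
  rewrite Rplus_0_r in H.
  refine (is_lim_seq_ext _ _ _ (fun n => _) H); field; apply u_neq0.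
Qed.

Let denominator_lim : is_lim_seq (fun n => sin (c * phi n) / u n) (c * omega).
Proof.
  assert (c_phi_ne : eventually (fun n => c * phi n <> 0)).
  { apply (filter_imp _ _ (fun n Hn => Rmult_integral_contrapositive _ _ (conj c_neq0 Hn))).
    exact phi_neq0. }
  pose proof (is_lim_seq_mult' _ _ _ _ (is_lim_seq_sinc _ c_phi_lim c_phi_ne)
                (is_lim_seq_scal_l _ c _ phi_u_lim)) as H.
  simpl in H; rewrite Rmult_1_l in H.
  eapply is_lim_seq_ext_loc; [|exact H].
  refine (filter_imp _ _ (fun n Hn => _) phi_neq0).
  field; split; [apply u_neq0 | auto].
Qed.

Lemma is_lim_seq_sin_quotient :
  is_lim_seq (fun n => u n * f n) (sin (nu * omega) / (c * omega)).
Proof.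
  assert (c_omega : c * omega <> 0) by (apply Rmult_integral_contrapositive; auto).
  pose proof (is_lim_seq_div' _ _ _ _
                (is_lim_seq_continuous sin _ _ (continuity_sin _) numerator_lim)
                denominator_lim c_omega) as H.
  pose proof (is_lim_seq_eventually_neq0 _ _ denominator_lim c_omega) as den_ne.
  eapply is_lim_seq_ext_loc; [|exact H].
  refine (filter_imp _ _ (fun n Hn => _) (filter_and _ _ den_ne f_sin_quotient)).
  destruct Hn as [Hden Hf]; rewrite <- Hf.
  assert (sin (c * phi n) <> 0) by (intro E; apply Hden; rewrite E; unfold Rdiv; ring).
  field; auto.
Qed.

End SineQuotient.

Lemma is_lim_seq_INR_mul_Rpower (t : nat -> nat) (e nu : R) : nu <> 0 ->
  is_lim_seq (fun N => INR (t N) / (Rpower (INR N) e * nu)) 1 ->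
  is_lim_seq (fun N => INR (t N) * Rpower (INR N) (- e)) nu.
Proof.
  intros Hnu Ht; pose proof (is_lim_seq_mult' _ _ _ _ Ht (is_lim_seq_const nu)) as H.
  rewrite Rmult_1_l in H; refine (is_lim_seq_ext _ _ _ (fun N => _) H).
  rewrite Rpower_Ropp; field; split; [apply Rgt_not_eq, exp_pos | exact Hnu].
Qed.

Lemma Rpower_neg_half (z : R) : Rpower z (- (1 / 2)) = Rpower z (- (1 / 4)) ^ 2.
Proof.
  replace (- (1 / 2)) with (- (1 / 4) + - (1 / 4)) by field.
  rewrite Rpower_plus; ring.
Qed.

Lemma neg_cos_double_asin (v x' omega : R) :
  omega * omega = 2 * x' -> -1 <= omega / 2 * v <= 1 ->
  v ^ 2 * x' - 1 = - cos (2 * asin (omega / 2 * v)).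
Proof. intros Homega Hv; rewrite cos_2_asin by exact Hv; nra. Qed.

Theorem lemma6p3 (a nu1 x' : R) (s : nat -> nat) :
  (a = 1 / 2 \/ a = - (1 / 2)) ->
  0 < nu1 -> 0 < x' ->
  is_lim_seq (fun N => INR (s N) / (Rpower (INR N) (1 / 4) * nu1)) 1 ->
  is_lim_seq
    (fun N => Rpower (INR N) (- (1 / 4)) * (-1) ^ (s N)
              * J (s N) a (Rpower (INR N) (- (1 / 2)) * x' - 1))
    (sin (nu1 * sqrt (2 * x')) / (Rpower 2 a * sqrt x')).
Proof.
  intros Ha Hnu Hx Hs.
  set (u := fun N => Rpower (INR N) (- (1 / 4))).
  set (omega := sqrt (2 * x')).
  set (phi := fun N => 2 * asin (omega / 2 * u N)).
  assert (u_pos : forall N, 0 < u N) by (intro; apply exp_pos).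
  assert (u_neq0 : forall N, u N <> 0) by (intro; apply Rgt_not_eq, u_pos).
  assert (u_lim : is_lim_seq u 0) by (apply is_lim_seq_Rpower_INR_neg; lra).
  assert (omega_pos : 0 < omega) by (apply sqrt_lt_R0; lra).
  assert (omega_sq : omega * omega = 2 * x') by (apply sqrt_sqrt; lra).
  assert (unit : eventually (fun N => -1 <= omega / 2 * u N <= 1)).
  { apply is_lim_seq_eventually_in_unit; replace 0 with (omega / 2 * 0) by ring.
    exact (is_lim_seq_scal_l _ _ 0 u_lim). }
  rewrite <- (J_phase_sqrt2 a Ha), Rmult_assoc, <- sqrt_mult by lra.
  apply (is_lim_seq_ext
           (fun N => u N * ((-1) ^ s N * J (s N) a (Rpower (INR N) (- (1 / 2)) * x' - 1))));
    [intro; unfold u; ring|].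
  apply (is_lim_seq_sin_quotient u phi _ s omega); [exact u_neq0 | exact u_lim | | | |
    unfold J_phase; destruct Ha; lra | lra | ].
  - pose proof (is_lim_seq_double_asin_div u (omega / 2) u_neq0 ltac:(lra) u_lim) as H.
    replace (2 * (omega / 2)) with omega in H by field; exact H.
  - apply is_lim_seq_INR_mul_Rpower; [lra | exact Hs].
  - refine (filter_imp _ _ (fun N HN => _) unit).
    apply Rmult_integral_contrapositive; split; [lra|].
    apply asin_neq0; [exact HN | apply Rmult_integral_contrapositive; split; [lra | auto]].
  - refine (filter_imp _ _ (fun N HN => _) unit).
    rewrite Rpower_neg_half; fold (u N); rewrite (neg_cos_double_asin _ x' omega omega_sq HN).
    apply J_neg_cos, Ha.
Qed.
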